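(* Let $n>1$ and $m$ be integers with $0<m<n$. Then the following maps are well defined, order-preserving and bijective: $$\mathcal{F}^{\leq\frac12}(n,m)\to\mathcal{F}^m_{n-m},\ \tfrac hk\mapsto\tfrac{h}{k-h};\qquad \mathcal{F}^m_{n-m}\to\mathcal{F}^{\leq\frac12}(n,m),\ \tfrac hk\mapsto\tfrac{h}{k+h};$$ $$\mathcal{F}^{\geq\frac12}(n,m)\to\mathcal{G}_m^{2m-n},\ \tfrac hk\mapsto\tfrac{2h-k}{h};\qquad \mathcal{G}_m^{2m-n}\to\mathcal{F}^{\geq\frac12}(n,m),\ \tfrac hk\mapsto\tfrac{k}{2k-h}.$$ Moreover, the following maps are well defined, order-reversing and bijective: $$\mathcal{F}^{\leq\frac12}(n,m)\to\mathcal{G}^{n-2m}_{n-m},\ \tfrac hk\mapsto\tfrac{k-2h}{k-h};\qquad \mathcal{G}^{n-2m}_{n-m}\to\mathcal{F}^{\leq\frac12}(n,m),\ \tfrac hk\mapsto\tfrac{k-h}{2k-h};$$ $$\mathcal{F}^{\geq\frac12}(n,m)\to\mathcal{F}^{n-m}_m,\ \tfrac hk\mapsto\tfrac{k-h}{h};\qquad \mathcal{F}^{n-m}_m\to\mathcal{F}^{\geq\frac12}(n,m),\ \tfrac hk\mapsto\tfrac{k}{k+h}.$$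
   Context: For an integer $N\geq 1$, the Farey sequence $\mathcal{F}_N$ is the ascending sequence of irreducible fractions $\tfrac hk$ (with $h\ge0$, $k\ge1$, $\gcd(h,k)=1$) such that $\tfrac01\leq\tfrac hk\leq\tfrac11$ and $1\leq k\leq N$. For integers $N\ge1$ and $M$, let $\mathcal{F}_N^M:=\left(\tfrac hk\in\mathcal{F}_N:\ h\leq M\right)$ and $\mathcal{G}_N^M:=\left(\tfrac hk\in\mathcal{F}_N:\ k-h\leq N-M\right)$. For $0<m<n$, let $\mathcal{F}(n,m):=\left(\tfrac hk\in\mathcal{F}_n:\ h\leq m,\ k-h\leq n-m\right)$ (this is the sequence of reduced fractions $\rho(b\wedge a)/\rho(b)$, over nonzero elements $b$ of the Boolean lattice of rank $n$, for a fixed element $a$ of rank $m$, where $\rho$ is rank). Its left halfsequence is $\mathcal{F}^{\leq\frac12}(n,m):=\left(\tfrac hk\in\mathcal{F}(n,m):\ \tfrac hk\leq\tfrac12\right)$ and its right halfsequence is $\mathcal{F}^{\geq\frac12}(n,m):=\left(\tfrac hk\in\mathcal{F}(n,m):\ \tfrac hk\geq\tfrac12\right)$. All sequences are ordered as rational numbers and fractions are written in lowest terms. *)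

(* Farey fractions are represented as rationals (type rat),
   which are always in lowest terms: h = numq q, k = denq q. *)
From mathcomp Require Import all_boot all_order all_algebra.
Set Implicit Arguments. Unset Strict Implicit. Unset Printing Implicit Defensive.
Import Order.TTheory GRing.Theory Num.Theory.
Local Open Scope ring_scope.

Definition qfrac (h k : int) : rat := h%:~R / k%:~R.

Definition farey (N : nat) : pred rat :=
  fun q => (0 <= q <= 1) && (denq q <= N%:Z).

Definition fareyF (N : nat) (M : int) : pred rat :=
  fun q => farey N q && (numq q <= M).

Definition fareyG (N : nat) (M : int) : pred rat :=
  fun q => farey N q && (denq q - numq q <= N%:Z - M).

Definition fareyB (n m : nat) : pred rat :=
  fun q => [&& farey n q, numq q <= m%:Z & denq q - numq q <= n%:Z - m%:Z].

Definition fareyB_left (n m : nat) : pred rat :=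
  fun q => fareyB n m q && (q <= 1 / 2).
Definition fareyB_right (n m : nat) : pred rat :=
  fun q => fareyB n m q && (1 / 2 <= q).

Definition order_preserving_bij (A B : pred rat) (f : rat -> rat) : Prop :=
  [/\ {in A, forall x, B (f x)},
      {in A &, forall x y, x <= y -> f x <= f y},
      {in A &, injective f}
    & {in B, forall y, exists2 x, A x & f x = y}].

Definition order_reversing_bij (A B : pred rat) (f : rat -> rat) : Prop :=
  [/\ {in A, forall x, B (f x)},
      {in A &, forall x y, x <= y -> f y <= f x},
      {in A &, injective f}
    & {in B, forall y, exists2 x, A x & f x = y}].

(* A unimodular integer matrix [[a, b], [c, d]] acts on fractions by
   h/k |-> (a h + b k)/(c h + d k). It maps coprime pairs to coprime pairs,
   so when the new denominator is positive it sends a fraction in lowest terms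
   to one in lowest terms, and the inverse matrix gives the inverse map; the
   map is increasing when the determinant is 1 and decreasing when it is -1.
   The four pairs of maps are given by such matrices and their inverses, and
   the defining conditions of the Farey-type sequences become linear
   inequalities on (h, k) that these matrices carry into each other. *)

From mathcomp Require Import all_boot all_order all_algebra.
From mathcomp Require Import zify ring.
Set Implicit Arguments. Unset Strict Implicit. Unset Printing Implicit Defensive.
Import Order.TTheory GRing.Theory Num.Theory.
Local Open Scope ring_scope.

Lemma rat_leE (x y : rat) : (x <= y) = (numq x * denq y <= numq y * denq x).
Proof. exact: le_ratE. Qed.

Lemma qfrac_num_den (q : rat) : qfrac (numq q) (denq q) = q.
Proof. exact: divq_num_den. Qed.

Lemma qfrac_le (a b c d : int) : 0 < b -> 0 < d ->
  (qfrac a b <= qfrac c d) = (a * d <= c * b).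
Proof.
move=> b0 d0; rewrite /qfrac ler_pdivrMr ?ltr0z // mulrAC ler_pdivlMr ?ltr0z //.
by rewrite -!intrM ler_int.
Qed.

Lemma numden_qfrac (a b : int) : 0 < b -> coprimez a b ->
  numq (qfrac a b) = a /\ denq (qfrac a b) = b.
Proof.
move=> b0 cab; rewrite /qfrac coprimeq_num // coprimeq_den // gtr0_sg // mul1r.
by rewrite (negbTE (lt0r_neq0 b0)) gtr0_norm.
Qed.

Lemma coprimez_lincomb (h k h' k' a b c d : int) : coprimez h k ->
  h = a * h' + b * k' -> k = c * h' + d * k' -> coprimez h' k'.
Proof.
move=> /coprimezP [[u v] /= uv1] eh ek; apply/coprimezP.
by exists (u * a + v * c, u * b + v * d) => /=; rewrite -uv1 eh ek; ring.
Qed.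

Definition mobius (a b c d : int) (q : rat) : rat :=
  qfrac (a * numq q + b * denq q) (c * numq q + d * denq q).

Definition mx_linv (a b c d a' b' c' d' : int) : bool :=
  [&& a' * a + b' * c == 1, a' * b + b' * d == 0,
      c' * a + d' * c == 0 & c' * b + d' * d == 1].

Section MobiusInverse.
Variables (a b c d a' b' c' d' : int).
Hypothesis linv : mx_linv a b c d a' b' c' d'.

Lemma mx_linv_det : (a' * d' - b' * c') * (a * d - b * c) = 1.
Proof.
case/and4P: linv => /eqP e1 /eqP e2 /eqP e3 /eqP e4.
transitivity ((a' * a + b' * c) * (c' * b + d' * d)
              - (a' * b + b' * d) * (c' * a + d' * c)); first by ring.
by rewrite e1 e2 e3 e4; ring.
Qed.

Lemma mx_linv_apply (h k : int) :
  a' * (a * h + b * k) + b' * (c * h + d * k) = h /\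
  c' * (a * h + b * k) + d' * (c * h + d * k) = k.
Proof.
case/and4P: linv => /eqP e1 /eqP e2 /eqP e3 /eqP e4; split.
- transitivity ((a' * a + b' * c) * h + (a' * b + b' * d) * k); first by ring.
  by rewrite e1 e2; ring.
- transitivity ((c' * a + d' * c) * h + (c' * b + d' * d) * k); first by ring.
  by rewrite e3 e4; ring.
Qed.

Variable q : rat.
Hypothesis den_gt0 : 0 < c * numq q + d * denq q.

Lemma numden_mobius :
  numq (mobius a b c d q) = a * numq q + b * denq q /\
  denq (mobius a b c d q) = c * numq q + d * denq q.
Proof.
apply: numden_qfrac => //.
have [eh ek] := mx_linv_apply (numq q) (denq q).
exact: coprimez_lincomb (coprime_num_den q) (esym eh) (esym ek).
Qed.

Lemma mobiusK : mobius a' b' c' d' (mobius a b c d q) = q.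
Proof.
rewrite {1}/mobius; have [-> ->] := numden_mobius; have [-> ->] := mx_linv_apply (numq q) (denq q).
exact: qfrac_num_den.
Qed.

End MobiusInverse.

Lemma mobius_le (a b c d : int) (x y : rat) :
  0 < c * numq x + d * denq x -> 0 < c * numq y + d * denq y ->
  (mobius a b c d x <= mobius a b c d y) =
  ((a * d - b * c) * (numq x * denq y - numq y * denq x) <= 0).
Proof. by move=> x0 y0; rewrite qfrac_le // -subr_le0; congr (_ <= 0); ring. Qed.

Section MobiusBijection.
Variables (a b c d a' b' c' d' : int).
Hypotheses (linv : mx_linv a b c d a' b' c' d') (rinv : mx_linv a' b' c' d' a b c d).
Variables (A B : pred rat) (PA PB : int -> int -> bool).
Hypotheses (AE : forall q, A q = PA (numq q) (denq q))
           (BE : forall q, B q = PB (numq q) (denq q)).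
Hypothesis mapsA : forall h k : int, 0 < k -> PA h k ->
  0 < c * h + d * k /\ PB (a * h + b * k) (c * h + d * k).
Hypothesis mapsB : forall h k : int, 0 < k -> PB h k ->
  0 < c' * h + d' * k /\ PA (a' * h + b' * k) (c' * h + d' * k).
Variable f : rat -> rat.
Hypothesis fE : f =1 mobius a b c d.

Lemma mobius_den_gt0 : {in A, forall x, 0 < c * numq x + d * denq x}.
Proof. by move=> x; rewrite unfold_in AE => /(mapsA (denq_gt0 x)) []. Qed.

Lemma mobius_bij :
  [/\ {in A, forall x, B (f x)},
      {in A &, injective f}
    & {in B, forall y, exists2 x, A x & f x = y}].
Proof.
have posB : {in B, forall y, 0 < c' * numq y + d' * denq y}.
  by move=> y; rewrite unfold_in BE => /(mapsB (denq_gt0 y)) [].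
split.
- move=> x Ax; rewrite fE BE; have [-> ->] := numden_mobius linv (mobius_den_gt0 Ax).
  by move: Ax; rewrite unfold_in AE => /(mapsA (denq_gt0 x)) [].
- move=> x y Ax Ay; rewrite !fE => fxy.
  by rewrite -(mobiusK linv (mobius_den_gt0 Ax)) fxy mobiusK // mobius_den_gt0.
- move=> y By; exists (mobius a' b' c' d' y); last by rewrite fE mobiusK ?posB.
  rewrite AE; have [-> ->] := numden_mobius rinv (posB _ By).
  by move: By; rewrite unfold_in BE => /(mapsB (denq_gt0 y)) [].
Qed.

End MobiusBijection.

Section MobiusOrder.
Variables (a b c d a' b' c' d' : int).
Hypotheses (linv : mx_linv a b c d a' b' c' d') (rinv : mx_linv a' b' c' d' a b c d).
Variables (A B : pred rat) (PA PB : int -> int -> bool).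
Hypotheses (AE : forall q, A q = PA (numq q) (denq q))
           (BE : forall q, B q = PB (numq q) (denq q)).
Hypothesis mapsA : forall h k : int, 0 < k -> PA h k ->
  0 < c * h + d * k /\ PB (a * h + b * k) (c * h + d * k).
Hypothesis mapsB : forall h k : int, 0 < k -> PB h k ->
  0 < c' * h + d' * k /\ PA (a' * h + b' * k) (c' * h + d' * k).
Variables f g : rat -> rat.
Hypotheses (fE : f =1 mobius a b c d) (gE : g =1 mobius a' b' c' d').

Let bijA := mobius_bij linv rinv AE BE mapsA mapsB fE.
Let bijB := mobius_bij rinv linv BE AE mapsB mapsA gE.
Let posA := mobius_den_gt0 AE mapsA.
Let posB := mobius_den_gt0 BE mapsB.

Lemma mobius_order_preserving_bij : a * d - b * c = 1 ->
  order_preserving_bij A B f /\ order_preserving_bij B A g.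
Proof.
move=> det1; have det1' : a' * d' - b' * c' = 1.
  by have := mx_linv_det linv; rewrite det1 mulr1.
have [[fAB finj fsurj] [gBA ginj gsurj]] := (bijA, bijB).
by split; split=> // x y xP yP; rewrite ?fE ?gE mobius_le ?posA ?posB //
  ?det1 ?det1' mul1r subr_le0 -rat_leE.
Qed.

Lemma mobius_order_reversing_bij : a * d - b * c = -1 ->
  order_reversing_bij A B f /\ order_reversing_bij B A g.
Proof.
move=> detN1; have detN1' : a' * d' - b' * c' = -1.
  by have := mx_linv_det linv; rewrite detN1 mulrN1 => /eqP; rewrite eqr_oppLR => /eqP.
have [[fAB finj fsurj] [gBA ginj gsurj]] := (bijA, bijB).
by split; split=> // x y xP yP; rewrite ?fE ?gE mobius_le ?posA ?posB //
  ?detN1 ?detN1' mulN1r oppr_le0 subr_ge0 -rat_leE.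
Qed.

End MobiusOrder.

Lemma fareyE (N : nat) (q : rat) :
  farey N q = [&& 0 <= numq q, numq q <= denq q & denq q <= N%:Z].
Proof. by rewrite /farey -numq_ge0 [q <= 1]rat_leE /= mulr1 mul1r andbA. Qed.

Lemma le_half (q : rat) : (q <= 1 / 2) = (2 * numq q <= denq q).
Proof. by rewrite rat_leE (_ : numq (1 / 2) = 1) // (_ : denq (1 / 2) = 2) // mul1r mulrC. Qed.

Lemma ge_half (q : rat) : (1 / 2 <= q) = (denq q <= 2 * numq q).
Proof. by rewrite rat_leE (_ : numq (1 / 2) = 1) // (_ : denq (1 / 2) = 2) // mul1r mulrC. Qed.

Definition fareyB_left_nd (n m : nat) (h k : int) : bool :=
  [&& 0 <= h, h <= k, k <= n%:Z, h <= m%:Z, k - h <= n%:Z - m%:Z & 2 * h <= k].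
Definition fareyB_right_nd (n m : nat) (h k : int) : bool :=
  [&& 0 <= h, h <= k, k <= n%:Z, h <= m%:Z, k - h <= n%:Z - m%:Z & k <= 2 * h].
Definition fareyF_nd (N : nat) (M h k : int) : bool :=
  [&& 0 <= h, h <= k, k <= N%:Z & h <= M].
Definition fareyG_nd (N : nat) (M h k : int) : bool :=
  [&& 0 <= h, h <= k, k <= N%:Z & k - h <= N%:Z - M].

Lemma fareyB_leftE n m q : fareyB_left n m q = fareyB_left_nd n m (numq q) (denq q).
Proof. by rewrite /fareyB_left /fareyB fareyE le_half /fareyB_left_nd; apply/idP/idP; lia. Qed.

Lemma fareyB_rightE n m q : fareyB_right n m q = fareyB_right_nd n m (numq q) (denq q).
Proof. by rewrite /fareyB_right /fareyB fareyE ge_half /fareyB_right_nd; apply/idP/idP; lia. Qed.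

Lemma fareyFE N M q : fareyF N M q = fareyF_nd N M (numq q) (denq q).
Proof. by rewrite /fareyF fareyE /fareyF_nd; apply/idP/idP; lia. Qed.

Lemma fareyGE N M q : fareyG N M q = fareyG_nd N M (numq q) (denq q).
Proof. by rewrite /fareyG fareyE /fareyG_nd; apply/idP/idP; lia. Qed.

Ltac mobius_side_conditions :=
  by [ move=> q; rewrite /mobius; congr qfrac; ring
     | move=> h k k_gt0;
       rewrite ?/fareyB_left_nd ?/fareyB_right_nd ?/fareyF_nd ?/fareyG_nd => hk;
       split; lia ].

Lemma fareyB_left_fareyF_bij n m :
  order_preserving_bij (fareyB_left n m) (fareyF (n - m) m%:Z)
    (fun q => qfrac (numq q) (denq q - numq q)) /\
  order_preserving_bij (fareyF (n - m) m%:Z) (fareyB_left n m)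
    (fun q => qfrac (numq q) (denq q + numq q)).
Proof.
by apply: (@mobius_order_preserving_bij 1 0 (-1) 1 1 0 1 1 _ _ _ _ _ _
  (fareyB_leftE n m) (fareyFE _ _)) => //; mobius_side_conditions.
Qed.

Lemma fareyB_right_fareyG_bij n m :
  order_preserving_bij (fareyB_right n m) (fareyG m (2 * m%:Z - n%:Z))
    (fun q => qfrac (2 * numq q - denq q) (numq q)) /\
  order_preserving_bij (fareyG m (2 * m%:Z - n%:Z)) (fareyB_right n m)
    (fun q => qfrac (denq q) (2 * denq q - numq q)).
Proof.
by apply: (@mobius_order_preserving_bij 2 (-1) 1 0 0 1 (-1) 2 _ _ _ _ _ _
  (fareyB_rightE n m) (fareyGE _ _)) => //; mobius_side_conditions.
Qed.

Lemma fareyB_left_fareyG_bij n m :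
  order_reversing_bij (fareyB_left n m) (fareyG (n - m) (n%:Z - 2 * m%:Z))
    (fun q => qfrac (denq q - 2 * numq q) (denq q - numq q)) /\
  order_reversing_bij (fareyG (n - m) (n%:Z - 2 * m%:Z)) (fareyB_left n m)
    (fun q => qfrac (denq q - numq q) (2 * denq q - numq q)).
Proof.
by apply: (@mobius_order_reversing_bij (-2) 1 (-1) 1 (-1) 1 (-1) 2 _ _ _ _ _ _
  (fareyB_leftE n m) (fareyGE _ _)) => //; mobius_side_conditions.
Qed.

Lemma fareyB_right_fareyF_bij n m :
  order_reversing_bij (fareyB_right n m) (fareyF m (n%:Z - m%:Z))
    (fun q => qfrac (denq q - numq q) (numq q)) /\
  order_reversing_bij (fareyF m (n%:Z - m%:Z)) (fareyB_right n m)
    (fun q => qfrac (denq q) (denq q + numq q)).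
Proof.
by apply: (@mobius_order_reversing_bij (-1) 1 1 0 0 1 1 1 _ _ _ _ _ _
  (fareyB_rightE n m) (fareyFE _ _)) => //; mobius_side_conditions.
Qed.

Theorem theorem2 (n m : nat) (hn : (1 < n)%N) (hm0 : (0 < m)%N) (hmn : (m < n)%N) :
  let h q := numq q in let k q := denq q in
  ([/\ order_preserving_bij (fareyB_left n m) (fareyF (n - m) m%:Z)
        (fun q => qfrac (h q) (k q - h q)),
      order_preserving_bij (fareyF (n - m) m%:Z) (fareyB_left n m)
        (fun q => qfrac (h q) (k q + h q)),
      order_preserving_bij (fareyB_right n m) (fareyG m (2 * m%:Z - n%:Z))
        (fun q => qfrac (2 * h q - k q) (h q))
    & order_preserving_bij (fareyG m (2 * m%:Z - n%:Z)) (fareyB_right n m)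
        (fun q => qfrac (k q) (2 * k q - h q))]) /\
  ([/\ order_reversing_bij (fareyB_left n m) (fareyG (n - m) (n%:Z - 2 * m%:Z))
        (fun q => qfrac (k q - 2 * h q) (k q - h q)),
      order_reversing_bij (fareyG (n - m) (n%:Z - 2 * m%:Z)) (fareyB_left n m)
        (fun q => qfrac (k q - h q) (2 * k q - h q)),
      order_reversing_bij (fareyB_right n m) (fareyF m (n%:Z - m%:Z))
        (fun q => qfrac (k q - h q) (h q))
    & order_reversing_bij (fareyF m (n%:Z - m%:Z)) (fareyB_right n m)
        (fun q => qfrac (k q) (k q + h q))]).
Proof.
have [LF FL] := fareyB_left_fareyF_bij n m.
have [RG GR] := fareyB_right_fareyG_bij n m.
have [LG GL] := fareyB_left_fareyG_bij n m.
have [RF FR] := fareyB_right_fareyF_bij n m.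
by split; split.
Qed.
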